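(* Let $L\subset\mathbb R^n$ be a regular (embedded) surface of dimension $r$, $1\le r\le n-1$, which is a closed subset of $\mathbb R^n$. If the normal (affine) planes of $L$ at distinct points of $L$ are pairwise disjoint, then $L$ is an $r$-dimensional affine plane.
   Context: The normal plane of $L$ at $p\in L$ is the affine $(n-r)$-plane through $p$ orthogonal to $T_pL$. *)

From Stdlib Require Import Reals.
From mathcomp Require Import all_boot.
Set Implicit Arguments. Unset Strict Implicit. Unset Printing Implicit Defensive.

Local Open Scope R_scope.

Definition vec (n : nat) := 'I_n -> R.

Definition vsum (m : nat) (f : 'I_m -> R) : R := \big[Rplus/0]_(i < m) f i.
Definition vadd n (u v : vec n) : vec n := fun j => u j + v j.
Definition vsub n (u v : vec n) : vec n := fun j => u j - v j.
Definition vscale n (a : R) (u : vec n) : vec n := fun j => a * u j.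
Definition dot n (u v : vec n) : R := vsum (fun j => u j * v j).
Definition vnorm n (u : vec n) : R := sqrt (dot u u).
Definition dist n (u v : vec n) : R := vnorm (vsub u v).
Definition ebasis n (i : 'I_n) : vec n := fun j => if j == i then 1 else 0.
Definition lincomb n m (c : 'I_m -> R) (v : 'I_m -> vec n) : vec n :=
  fun j => vsum (fun i => c i * v i j).
Definition lin_indep n m (v : 'I_m -> vec n) : Prop :=
  forall c : 'I_m -> R, (forall j, lincomb c v j = 0) -> forall i, c i = 0.

Definition is_open n (U : vec n -> Prop) : Prop :=
  forall x, U x -> exists delta, 0 < delta /\ forall y, dist x y < delta -> U y.
Definition is_closed n (L : vec n -> Prop) : Prop :=
  forall x, (forall eps, 0 < eps -> exists y, L y /\ dist x y < eps) -> L x.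

Definition cont_on n m (S : vec n -> Prop) (g : vec n -> vec m) : Prop :=
  forall x, S x -> forall eps, 0 < eps -> exists delta, 0 < delta /\
    forall y, S y -> dist x y < delta -> dist (g x) (g y) < eps.

Definition has_partial r (g : vec r -> R) (i : 'I_r) (x : vec r) (l : R) : Prop :=
  derivable_pt_lim (fun t => g (vadd x (vscale t (ebasis i)))) 0 l.

Fixpoint Ck r (k : nat) (U : vec r -> Prop) (g : vec r -> R) : Prop :=
  match k with
  | O => cont_on U (fun x (_ : 'I_1) => g x)
  | S k' => cont_on U (fun x (_ : 'I_1) => g x) /\
      exists D : 'I_r -> vec r -> R,
        (forall i x, U x -> has_partial g i x (D i x)) /\
        (forall i, Ck k' U (D i))
  end.

Definition smooth_on r n (U : vec r -> Prop) (f : vec r -> vec n) : Prop :=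
  forall k j, Ck k U (fun x => f x j).

Definition immersion_on r n (U : vec r -> Prop) (f : vec r -> vec n) : Prop :=
  forall x, U x -> exists J : 'I_r -> vec n,
    (forall i j, has_partial (fun y => f y j) i x (J i j)) /\ lin_indep J.

(* L is a regular (embedded, smooth) surface of dimension r in R^n:
   every point p of L has an open neighbourhood W in R^n such that L ∩ W is
   the homeomorphic image of an open V ⊂ R^r under a smooth immersion phi. *)
Definition regular_surface n r (L : vec n -> Prop) : Prop :=
  forall p, L p -> exists (W : vec n -> Prop) (V : vec r -> Prop)
    (phi : vec r -> vec n) (psi : vec n -> vec r),
    is_open W /\ W p /\ is_open V /\
    smooth_on V phi /\ immersion_on V phi /\
    (forall y, V y -> W (phi y) /\ L (phi y) /\ psi (phi y) = y) /\
    (forall x, L x -> W x -> V (psi x) /\ phi (psi x) = x) /\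
    cont_on (fun x => L x /\ W x) psi.

Definition tangent_vec n (L : vec n -> Prop) (p v : vec n) : Prop :=
  exists (gamma : R -> vec n) (eps : R), 0 < eps /\
    (forall t, Rabs t < eps -> L (gamma t)) /\ gamma 0 = p /\
    forall j, derivable_pt_lim (fun t => gamma t j) 0 (v j).

Definition normal_plane n (L : vec n -> Prop) (p x : vec n) : Prop :=
  forall v, tangent_vec L p v -> dot (vsub x p) v = 0.

Definition affine_plane n r (L : vec n -> Prop) : Prop :=
  exists (a : vec n) (v : 'I_r -> vec n), lin_indep v /\
    forall x, L x <-> exists c : 'I_r -> R, x = vadd a (lincomb c v).

From Pilot Require Import Defs.
(* Fix p in L, a chart phi around p with phi y0 = p, and let J_1..J_r be the
   partial derivatives of phi at y0 (linearly independent).  We show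
   L = p + span J.  The argument rests on nearest points:
   - a nonempty closed set contains a point q nearest to any x, and x then lies
     on the normal plane at q (first variation);
   - [normal_flat]: if u is normal to L at q, then all of L lies in the
     hyperplane through q orthogonal to u; otherwise a point far out on the
     normal line at q has a nearest point q' <> q, and it lies on the normal
     planes at both q and q';
   - in the chart, each J_i is tangent at p, and every tangent vector at p is
     orthogonal to all vectors orthogonal to the J_i (first-order Taylor
     expansion of phi, plus a Lipschitz bound on the inverse chart).
   For x in L, the residual of the orthogonal projection of x - p onto span J
   is normal at p, hence by [normal_flat] orthogonal to x - p, hence zero.  For
   z in p + span J, with q its nearest point in L, z - q is normal at q, hence
   orthogonal to p - q and to the J_i, hence zero, so z = q lies in L. *)

From Stdlib Require Import Reals Lra FunctionalExtensionality Classical.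
From mathcomp Require Import all_boot all_order all_algebra all_classical all_reals.
From mathcomp Require Import topology normedtype derive Rstruct Rstruct_topology.
Set Implicit Arguments. Unset Strict Implicit. Unset Printing Implicit Defensive.
Local Open Scope R_scope.

Lemma vsum_ext m (f g : 'I_m -> R) : (forall i, f i = g i) -> vsum f = vsum g.
Proof. by move=> fg; apply: eq_bigr. Qed.

Lemma vsum_add m (f g : 'I_m -> R) : vsum (fun i => f i + g i) = vsum f + vsum g.
Proof. exact: big_split. Qed.

Lemma vsum_scal m c (f : 'I_m -> R) : vsum (fun i => c * f i) = c * vsum f.
Proof. by rewrite /vsum big_distrr. Qed.

Lemma vsum_sub m (f g : 'I_m -> R) : vsum (fun i => f i - g i) = vsum f - vsum g.
Proof.
rewrite (vsum_ext (g := fun i => f i + -1 * g i)) => [|i]; last ring.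
by rewrite vsum_add vsum_scal; ring.
Qed.

Lemma vsum_zero m : vsum (fun _ : 'I_m => 0) = 0.
Proof. exact: big1. Qed.

Lemma vsum_recr m (f : 'I_m.+1 -> R) :
  vsum f = vsum (fun i => f (widen_ord (leqnSn m) i)) + f ord_max.
Proof. exact: big_ord_recr. Qed.

Lemma vsum_const m e : vsum (fun _ : 'I_m => e) = INR m * e.
Proof.
elim: m => [|m IH]; first by rewrite /vsum big_ord0 /=; ring.
by rewrite vsum_recr IH S_INR; ring.
Qed.

Lemma vsum_swap m k (F : 'I_m -> 'I_k -> R) :
  vsum (fun i => vsum (fun j => F i j)) = vsum (fun j => vsum (fun i => F i j)).
Proof. exact: exchange_big. Qed.

Lemma vsum_delta m (i : 'I_m) a : vsum (fun j => if j == i then a else 0) = a.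
Proof. by rewrite /vsum (bigD1 i) //= eqxx big1 ?Rplus_0_r // => j /negbTE ->. Qed.

Lemma vsum_telescope (F : nat -> R) m :
  vsum (fun k : 'I_m => F k.+1 - F k) = F m - F 0%N.
Proof.
elim: m => [|m IH]; first by rewrite /vsum big_ord0; ring.
by rewrite vsum_recr IH /=; ring.
Qed.

Lemma vsum_le m (f g : 'I_m -> R) : (forall i, f i <= g i) -> vsum f <= vsum g.
Proof. by move=> fg; apply: (big_ind2 Rle) => *; [lra | lra | exact: fg]. Qed.

Lemma vsum_ge0 m (f : 'I_m -> R) : (forall i, 0 <= f i) -> 0 <= vsum f.
Proof. by move=> f0; rewrite -(vsum_zero m); exact: vsum_le. Qed.

Lemma vsum_single_le m (f : 'I_m -> R) i : (forall j, 0 <= f j) -> f i <= vsum f.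
Proof.
move=> f0; rewrite -{1}(vsum_delta i (f i)); apply: vsum_le => j.
by case: eqP => [->|_]; [lra | exact: f0].
Qed.

Lemma vsum_abs m (f : 'I_m -> R) : Rabs (vsum f) <= vsum (fun i => Rabs (f i)).
Proof.
apply: (big_ind2 (fun a b => Rabs a <= b)) => [|a b c d ab cd|i _]; last lra.
- by rewrite Rabs_R0; lra.
- by apply: Rle_trans (Rabs_triang _ _) _; lra.
Qed.

Definition sqdist n (x y : vec n) : R := dot (vsub x y) (vsub x y).

Lemma dot_comm n (u v : vec n) : dot u v = dot v u.
Proof. by apply: vsum_ext => i; ring. Qed.

Lemma dot_addl n (u v w : vec n) : dot (vadd u v) w = dot u w + dot v w.
Proof. by rewrite /dot -vsum_add; apply: vsum_ext => i; rewrite /vadd; ring. Qed.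

Lemma dot_subl n (u v w : vec n) : dot (vsub u v) w = dot u w - dot v w.
Proof. by rewrite /dot -vsum_sub; apply: vsum_ext => i; rewrite /vsub; ring. Qed.

Lemma dot_scalel n a (u w : vec n) : dot (vscale a u) w = a * dot u w.
Proof. by rewrite /dot -vsum_scal; apply: vsum_ext => i; rewrite /vscale; ring. Qed.

Lemma dot_scaler n a (u w : vec n) : dot w (vscale a u) = a * dot w u.
Proof. by rewrite dot_comm dot_scalel dot_comm. Qed.

Lemma dot_add_self n (a b : vec n) :
  dot (vadd a b) (vadd a b) = dot a a + 2 * dot a b + dot b b.
Proof. by rewrite /dot -vsum_scal -!vsum_add; apply: vsum_ext => j; rewrite /vadd; ring. Qed.

Lemma dot_scale_self n t (a : vec n) : dot (vscale t a) (vscale t a) = t * t * dot a a.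
Proof. by rewrite /dot -vsum_scal; apply: vsum_ext => j; rewrite /vscale; ring. Qed.

Lemma dot_lincomb n m (c : 'I_m -> R) (v : 'I_m -> vec n) w :
  dot (lincomb c v) w = vsum (fun i => c i * dot (v i) w).
Proof.
rewrite /dot /lincomb (vsum_ext (g := fun j => vsum (fun i => c i * v i j * w j))).
  by rewrite vsum_swap; apply: vsum_ext => i; rewrite -vsum_scal; apply: vsum_ext => j; ring.
by move=> j; rewrite Rmult_comm -vsum_scal; apply: vsum_ext => i; ring.
Qed.

Lemma dot_lincomb_orth n m (c : 'I_m -> R) (v : 'I_m -> vec n) w :
  (forall i, dot (v i) w = 0) -> dot (lincomb c v) w = 0.
Proof.
move=> vw; rewrite dot_lincomb -(vsum_zero m).
by apply: vsum_ext => i; rewrite vw; ring.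
Qed.

Lemma abs_sq x : Rabs x * Rabs x = x * x.
Proof. by rewrite -Rabs_mult Rabs_pos_eq //; nra. Qed.

Lemma coord_sq_le n (u : vec n) i : u i * u i <= dot u u.
Proof. by apply: (vsum_single_le (f := fun j => u j * u j)) => j; nra. Qed.

Lemma dot_self_ge0 n (u : vec n) : 0 <= dot u u.
Proof. by apply: vsum_ge0 => i; nra. Qed.

Lemma dot_self_eq0 n (u : vec n) : dot u u = 0 -> u = (fun _ => 0).
Proof.
by move=> u0; apply: functional_extensionality => i; have := coord_sq_le u i; nra.
Qed.

Lemma sqdist_eq0 n (x y : vec n) : sqdist x y = 0 -> x = y.
Proof.
move/dot_self_eq0 => xy; apply: functional_extensionality => i.
by have := congr1 (fun f => f i) xy; rewrite /vsub /=; lra.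
Qed.

Lemma dist_sq n (x y : vec n) : Defs.dist x y * Defs.dist x y = sqdist x y.
Proof. by rewrite /Defs.dist /vnorm sqrt_sqrt //; exact: dot_self_ge0. Qed.

Lemma dist_sym n (x y : vec n) : Defs.dist x y = Defs.dist y x.
Proof. by rewrite /Defs.dist /vnorm; congr sqrt; apply: vsum_ext => i; rewrite /vsub; ring. Qed.

Lemma dist_coord n (x y : vec n) i : Rabs (x i - y i) <= Defs.dist x y.
Proof.
have d0 : 0 <= Defs.dist x y by exact: sqrt_pos.
rewrite -[X in _ <= X]Rabs_right; last lra.
by apply: Rsqr_le_abs_0; rewrite /Rsqr dist_sq; exact: (coord_sq_le (vsub x y) i).
Qed.

Lemma dist_basis n (x : vec n) t i : Defs.dist x (vadd x (vscale t (ebasis i))) = Rabs t.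
Proof.
rewrite /Defs.dist /vnorm -[dot _ _]/(sqdist _ _).
have -> : sqdist x (vadd x (vscale t (ebasis i))) = t * t.
  rewrite -(vsum_delta i (t * t)); apply: vsum_ext => k.
  by rewrite /vsub /vadd /vscale /ebasis; case: eqP => _; ring.
exact: sqrt_Rsqr_abs.
Qed.

Definition norm1 n (u : vec n) : R := vsum (fun i => Rabs (u i)).

Definition sup_close n (d : R) (x y : vec n) : Prop := forall i, Rabs (x i - y i) <= d.

Lemma norm1_ge0 n (u : vec n) : 0 <= norm1 u.
Proof. by apply: vsum_ge0 => i; exact: Rabs_pos. Qed.

Lemma abs_le_norm1 n (u : vec n) i : Rabs (u i) <= norm1 u.
Proof. by apply: (vsum_single_le (f := fun j => Rabs (u j))) => j; exact: Rabs_pos. Qed.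

Lemma norm1_scale n a (u : vec n) : norm1 (vscale a u) = Rabs a * norm1 u.
Proof. by rewrite /norm1 -vsum_scal; apply: vsum_ext => j; rewrite /vscale Rabs_mult. Qed.

Lemma norm1_diff n (a b : vec n) : Rabs (norm1 a - norm1 b) <= norm1 (vsub a b).
Proof.
rewrite /norm1 -vsum_sub; apply: Rle_trans (vsum_abs _) _; apply: vsum_le => j.
exact: Rabs_triang_inv2.
Qed.

Lemma norm1_eq0 n (u : vec n) : norm1 u = 0 -> forall j, u j = 0.
Proof.
move=> u0 j; have := abs_le_norm1 u j; have := Rabs_pos (u j); rewrite u0 => ? ?.
by apply: NNPP => /Rabs_no_R0; lra.
Qed.

Lemma norm1_box n (u : vec n) e : (forall i, Rabs (u i) <= e) -> norm1 u <= INR n * e.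
Proof. by move=> ue; apply: Rle_trans (vsum_le ue) _; rewrite vsum_const; lra. Qed.

Lemma dist_le_norm1 n (x y : vec n) : Defs.dist x y <= norm1 (vsub x y).
Proof.
apply: Rsqr_incr_0_var; last exact: norm1_ge0.
rewrite /Rsqr dist_sq /sqdist /dot /norm1 -vsum_scal; apply: vsum_le => i.
have := abs_le_norm1 (vsub x y) i; have := Rabs_pos (vsub x y i).
by rewrite -abs_sq /norm1; nra.
Qed.

Lemma dist_le_sup n (x y : vec n) d : sup_close d x y -> Defs.dist x y <= INR n * d.
Proof. by move=> xy; apply: Rle_trans (dist_le_norm1 _ _) _; exact: norm1_box. Qed.

Lemma dot_abs_le n (u w : vec n) M : (forall i, Rabs (u i) <= M) -> Rabs (dot u w) <= M * norm1 w.
Proof.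
move=> uM; apply: Rle_trans (vsum_abs _) _; rewrite /norm1 -vsum_scal; apply: vsum_le => i.
by rewrite Rabs_mult; apply: Rmult_le_compat_r; [exact: Rabs_pos | exact: uM].
Qed.

(* If |u|_1 > n a with a >= 0, some coordinate exceeds a, so |u|^2 > a^2. *)
Lemma sqnorm_gt_of_norm1 n (u : vec n) a :
  0 <= a -> INR n * a < norm1 u -> a * a < dot u u.
Proof.
move=> a0 ua; have [i ai] : exists i, a < Rabs (u i).
  apply: NNPP => none; suff : norm1 u <= INR n * a by lra.
  by apply: norm1_box => i; apply: Rnot_lt_le => ai; apply: none; exists i.
apply: Rlt_le_trans (coord_sq_le u i).
by rewrite -(abs_sq (u i)); nra.
Qed.

Lemma le_of_le_eps a b : (forall e, 0 < e -> a <= b + e) -> a <= b.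
Proof. by move=> ab; apply: Rnot_lt_le => ba; have := ab ((a - b) / 2); lra. Qed.

Lemma eq0_of_small a K : (forall e, 0 < e -> Rabs a <= e * K) -> a = 0.
Proof.
move=> aK; have abs0 : Rabs a <= 0.
  apply: le_of_le_eps => e e0; have [K0|K0] := Rle_lt_dec K 0.
    by have := aK e e0; nra.
  have := aK (e / K) (Rdiv_lt_0_compat _ _ e0 K0).
  by rewrite /Rdiv Rmult_assoc Rinv_l; lra.
by apply: NNPP => /Rabs_no_R0; have := Rabs_pos a; lra.
Qed.

Lemma mul_div_succ_lt K e : 0 <= K -> 0 < e -> K * (e / (K + 1)) < e.
Proof.
move=> K0 e0; have -> : K * (e / (K + 1)) = e - e / (K + 1) by field; lra.
have : 0 < e / (K + 1) by apply: Rdiv_lt_0_compat; lra.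
lra.
Qed.

Lemma orth_of_min_on_line n (z u : vec n) :
  (forall t, dot z z <= dot (vadd z (vscale t u)) (vadd z (vscale t u))) -> dot z u = 0.
Proof.
move=> zmin; set a := dot z u; set B := dot u u.
have B0 : 0 <= B by exact: dot_self_ge0.
set s := a / (B + 1); have := zmin (- s); rewrite dot_add_self dot_scale_self dot_scaler -/a -/B.
have -> : a = s * (B + 1) by rewrite /s; field; lra.
move=> H; have : s * s * (B + 2) <= 0 by nra.
nra.
Qed.

Lemma lincomb_scale n r (J : 'I_r -> vec n) a c :
  lincomb (fun i => a * c i) J = vscale a (lincomb c J).
Proof.
apply: functional_extensionality => j; rewrite /lincomb /vscale -vsum_scal.
by apply: vsum_ext => i; ring.
Qed.

Lemma lincomb_add_basis n r (J : 'I_r -> vec n) c t i :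
  lincomb (fun k => c k + t * ebasis i k) J = vadd (lincomb c J) (vscale t (J i)).
Proof.
apply: functional_extensionality => j; rewrite /lincomb /vadd /vscale.
rewrite (vsum_ext (g := fun k => c k * J k j + t * (if k == i then J k j else 0))).
  rewrite vsum_add vsum_scal; congr (_ + t * _).
  by rewrite -(vsum_delta i (J i j)); apply: vsum_ext => k; case: eqP => [->|].
by move=> k; rewrite /ebasis; case: eqP => _; ring.
Qed.

(* total size of the entries of a family, a Lipschitz constant for lincomb *)
Definition entry_sum n r (J : 'I_r -> vec n) : R :=
  vsum (fun j => vsum (fun i => Rabs (J i j))).

Lemma entry_sum_ge0 n r (J : 'I_r -> vec n) : 0 <= entry_sum J.
Proof. by apply: vsum_ge0 => j; apply: vsum_ge0 => i; exact: Rabs_pos. Qed.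

Lemma lincomb_sup_close n r (J : 'I_r -> vec n) c c' d :
  0 <= d -> sup_close d c c' -> sup_close (d * entry_sum J) (lincomb c J) (lincomb c' J).
Proof.
move=> d0 cc' j.
have -> : lincomb c J j - lincomb c' J j = vsum (fun i => (c i - c' i) * J i j).
  by rewrite /lincomb -vsum_sub; apply: vsum_ext => i; ring.
apply: Rle_trans (vsum_abs _) _.
apply: Rle_trans (vsum_le (g := fun i => d * Rabs (J i j)) _) _.
  by move=> i; rewrite Rabs_mult; apply: Rmult_le_compat_r; [exact: Rabs_pos | exact: cc'].
rewrite vsum_scal; apply: Rmult_le_compat_l => //.
apply: (vsum_single_le (f := fun j => vsum (fun i => Rabs (J i j)))) => k.
by apply: vsum_ge0 => i; exact: Rabs_pos.
Qed.

Lemma vadd_scale_add r (z e : vec r) s t :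
  vadd (vadd z (vscale s e)) (vscale t e) = vadd z (vscale (s + t) e).
Proof. by apply: functional_extensionality => j; rewrite /vadd /vscale; ring. Qed.

Lemma vadd_scale0 r (z e : vec r) : vadd z (vscale 0 e) = z.
Proof. by apply: functional_extensionality => j; rewrite /vadd /vscale; ring. Qed.

(** The extreme value theorem of mathcomp-analysis, stated there
    for row vectors with the sup norm, is transferred to [vec m]; closedness and
    continuity are expressed with the coordinatewise distance [sup_close]. *)

Definition bounded_by m (M : R) (x : vec m) : Prop := forall i, Rabs (x i) <= M.

Lemma not_bounded_by m M (x : vec m) : ~ bounded_by M x -> exists i, M < Rabs (x i).
Proof.
move=> xM; apply: NNPP => none; apply: xM => i.
by apply: Rnot_lt_le => iM; apply: none; exists i.
Qed.

Definition sup_closed m (K : vec m -> Prop) : Prop :=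
  forall x, (forall e, 0 < e -> exists y, K y /\ sup_close e x y) -> K x.

Definition sup_continuous m (f : vec m -> R) : Prop :=
  forall x e, 0 < e -> exists d, 0 < d /\ forall y, sup_close d x y -> Rabs (f x - f y) < e.

Section ExtremeValue.
Import Order.TTheory GRing.Theory Num.Theory numFieldNormedType.Exports.
Local Open Scope classical_set_scope.
Local Open Scope ring_scope.

Lemma coord_le_mx_norm m (v : 'rV[R]_m) i : `|v ord0 i| <= `|v|.
Proof.
have -> : `|v| = mx_norm v by []; rewrite mx_normrE.
by apply/bigmax_geP; right => /=; exists (ord0, i).
Qed.

Lemma mx_norm_le_coords m (v : 'rV[R]_m) M :
  0 <= M -> (forall i, `|v ord0 i| <= M) -> `|v| <= M.
Proof.
move=> M0 vM; have -> : `|v| = mx_norm v by []; rewrite mx_normrE.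
by apply: bigmax_le => // -[a b] _ /=; rewrite (ord1 a).
Qed.

Lemma ball_sup_close m (v t : 'rV[R]_m) e :
  ball v e t -> sup_close e (fun i => v ord0 i) (fun i => t ord0 i).
Proof.
rewrite -ball_normE /= => vt i; apply/RleP; apply/ltW; apply: le_lt_trans vt.
have -> : Rabs (v ord0 i - t ord0 i) = `|(v - t) ord0 i| by rewrite !mxE.
exact: coord_le_mx_norm.
Qed.

Lemma vec_min_attained m (K : vec m -> Prop) (f : vec m -> R) :
  (exists x, K x) -> (exists M, forall x, K x -> bounded_by M x) ->
  sup_closed K -> sup_continuous f ->
  exists c, K c /\ forall x, K x -> Rle (f c) (f x).
Proof.
move=> [x0 Kx0] [M KM] Kcl fc.
pose A := [set v : 'rV[R]_m | K (fun i => v ord0 i)].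
pose F := fun v : 'rV[R]_m => f (fun i => v ord0 i).
have rowK (x : vec m) : (fun i => (\row_j x j) ord0 i) = x by apply: funext => i; rewrite mxE.
have A0 : A !=set0 by exists (\row_i x0 i); rewrite /A /= rowK.
have Ab : bounded_set A.
  rewrite /bounded_set /= /bounded_near; near=> M' => v /= Av.
  have MM' : `|M| <= M' by near: M'; apply: nbhs_pinfty_ge; rewrite realE normr_ge0.
  apply: mx_norm_le_coords => [|i]; first exact: le_trans (normr_ge0 _) MM'.
  apply: le_trans MM'; apply: le_trans (ler_norm M).
  by have /RleP := KM _ Av i.
Unshelve. all: end_near.
have Acl : closed A.
  move=> v Av; apply: Kcl => e /RltP e0.
  have [t [At vt]] := Av _ (nbhsx_ballx v e e0).
  by exists (fun i => t ord0 i); split => //; exact: ball_sup_close.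
have Fc : {within A, continuous F}.
  apply: continuous_subspaceT => v.
  apply/(@cvgrPdist_lt _ R^o _ _ (nbhs_filter v)) => e /RltP e0.
  have [d [/RltP d0 fd]] := fc (fun i => v ord0 i) e e0.
  apply/nbhs_ballP; exists d => //= t vt; apply/RltP.
  exact/fd/ball_sup_close.
have [c Ac cmin] := EVT_min_rV A0 (bounded_closed_compact Ab Acl) Fc.
exists (fun i => c ord0 i); split; first by move: Ac; rewrite inE.
move=> x Kx; rewrite -(rowK x); apply/RleP; apply: cmin.
by rewrite inE /A /= rowK.
Qed.

End ExtremeValue.

Lemma vec_min_coercive m (K : vec m -> Prop) (f : vec m -> R) x0 M :
  K x0 -> bounded_by M x0 -> sup_closed K -> sup_continuous f ->
  (forall x, K x -> ~ bounded_by M x -> f x0 <= f x) ->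
  exists c, K c /\ forall x, K x -> f c <= f x.
Proof.
move=> Kx0 x0M Kcl fc outside.
have [c [[Kc _] cmin]] : exists c, (K c /\ bounded_by M c) /\
    forall x, K x /\ bounded_by M x -> f c <= f x.
  apply: vec_min_attained => //; first by exists x0.
    by exists M => x [].
  move=> x xK; split.
    by apply: Kcl => e e0; have [y [[Ky _] xy]] := xK e e0; exists y.
  move=> i; apply: le_of_le_eps => e e0; have [y [[_ yM] xy]] := xK e e0.
  have := Rabs_triang (x i - y i) (y i); have -> : x i - y i + y i = x i by ring.
  by have := xy i; have := yM i; lra.
exists c; split => // x Kx; have [xM|xM] := Classical_Prop.classic (bounded_by M x); first exact: cmin.
exact: Rle_trans (cmin x0 (conj Kx0 x0M)) (outside x Kx xM).
Qed.

Lemma sup_continuous_of_bound m (f : vec m -> R) :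
  (forall x, exists K, 0 <= K /\
     forall d y, 0 <= d <= 1 -> sup_close d x y -> Rabs (f x - f y) <= K * d) ->
  sup_continuous f.
Proof.
move=> fb x e e0; have [K [K0 xK]] := fb x.
have d1 := Rmin_l 1 (e / (K + 1)); have d2 := Rmin_r 1 (e / (K + 1)).
have d0 : 0 < Rmin 1 (e / (K + 1)).
  by apply: Rmin_glb_lt; [lra | apply: Rdiv_lt_0_compat; lra].
exists (Rmin 1 (e / (K + 1))); split => // y xy.
apply: Rle_lt_trans (xK _ y _ xy) _; first lra.
apply: Rle_lt_trans (mul_div_succ_lt K0 e0).
exact: Rmult_le_compat_l.
Qed.

Lemma closed_sup_closed n (L : vec n -> Prop) : is_closed L -> sup_closed L.
Proof.
have n0 := pos_INR n.
move=> Lcl x xL; apply: Lcl => e e0.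
have e' : 0 < e / (INR n + 1) by apply: Rdiv_lt_0_compat; lra.
have [y [Ly xy]] := xL _ e'.
exists y; split => //; apply: Rle_lt_trans (dist_le_sup xy) _.
exact: mul_div_succ_lt.
Qed.

Lemma sqdist_sup_bound n (x y z : vec n) d : 0 <= d -> sup_close d y z ->
  Rabs (sqdist x y - sqdist x z) <= d * (2 * norm1 (vsub x y) + INR n * d).
Proof.
move=> d0 yz.
have -> : sqdist x y - sqdist x z =
    vsum (fun j => (z j - y j) * (2 * (x j - y j) + (y j - z j))).
  by rewrite /sqdist /dot -vsum_sub; apply: vsum_ext => j; rewrite /vsub; ring.
apply: Rle_trans (vsum_abs _) _.
apply: Rle_trans (vsum_le (g := fun j => 2 * d * Rabs (vsub x y j) + d * d) _) _.
  move=> j; rewrite Rabs_mult /vsub.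
  have := Rabs_triang (2 * (x j - y j)) (y j - z j); rewrite Rabs_mult (Rabs_right 2); last lra.
  have := yz j; rewrite Rabs_minus_sym => zy.
  by have := Rabs_pos (z j - y j); have := yz j; have := Rabs_pos (x j - y j); nra.
by rewrite vsum_add vsum_scal vsum_const -/(norm1 _); right; ring.
Qed.

Lemma nearest_point n (L : vec n -> Prop) x : (exists p, L p) -> is_closed L ->
  exists q, L q /\ forall y, L y -> sqdist x q <= sqdist x y.
Proof.
move=> [p Lp] Lcl.
have sq_ge a : Rabs a <= a * a + 1 by rewrite -(abs_sq a); have := Rabs_pos a; nra.
apply: (vec_min_coercive (x0 := p) (M := norm1 x + sqdist x p + 1)) => //.
- move=> i; have := Rabs_triang (x i) (p i - x i); have := abs_le_norm1 x i.
  have := coord_sq_le (vsub x p) i; have := sq_ge (p i - x i).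
  rewrite /vsub Rabs_minus_sym; have -> : x i + (p i - x i) = p i by ring.
  by rewrite -/(sqdist x p); nra.
- exact: closed_sup_closed.
- apply: sup_continuous_of_bound => y.
  exists (2 * norm1 (vsub x y) + INR n); split.
    by have := norm1_ge0 (vsub x y); have := pos_INR n; lra.
  move=> d z d1 yz; apply: Rle_trans (sqdist_sup_bound x d1.1 yz) _.
  have [d_0 d_1] := d1; have n0 := pos_INR n; have N0 := norm1_ge0 (vsub x y).
  have : INR n * (d * d) <= INR n * d by apply: Rmult_le_compat_l => //; nra.
  nra.
- move=> y _ /not_bounded_by [i iM].
  have := coord_sq_le (vsub x y) i; have := abs_le_norm1 x i.
  have := Rabs_triang (x i) (y i - x i); have -> : x i + (y i - x i) = y i by ring.
  rewrite Rabs_minus_sym -(abs_sq (vsub x y i)) /vsub -/(sqdist x y).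
  by have := dot_self_ge0 (vsub x p); rewrite -/(sqdist x p); nra.
Qed.

(** A linearly independent family is uniformly independent:
    |sum_i h_i J_i|_1 >= c0 |h|_1 for some c0 > 0 (minimise over the unit sphere). *)
Lemma lincomb_lower_bound n r (J : 'I_r -> vec n) : lin_indep J ->
  exists c0, 0 < c0 /\ forall h, c0 * norm1 h <= norm1 (lincomb h J).
Proof.
case: r J => [|r] J LI.
  exists 1; split => [|h]; first lra.
  by have := norm1_ge0 (lincomb h J); rewrite /norm1 /vsum big_ord0; lra.
have [hm [hm1 hmin]] : exists hm, norm1 hm = 1 /\
    forall h, norm1 h = 1 -> norm1 (lincomb hm J) <= norm1 (lincomb h J).
  apply: vec_min_attained.
  - exists (ebasis ord0); rewrite /norm1 -(vsum_delta (@ord0 r) 1); apply: vsum_ext => j.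
    by rewrite /ebasis; case: eqP => _; [exact: Rabs_R1 | exact: Rabs_R0].
  - by exists 1 => h h1 i; rewrite -h1; exact: abs_le_norm1.
  - move=> z zS; suff : norm1 z - 1 = 0 by lra.
    apply: (@eq0_of_small _ (INR r.+1)) => e e0; have [y [y1 zy]] := zS e e0.
    rewrite -y1; apply: Rle_trans (norm1_diff _ _) _; rewrite Rmult_comm.
    exact: norm1_box.
  - apply: sup_continuous_of_bound => x; exists (INR n * entry_sum J); split.
      by apply: Rmult_le_pos; [exact: pos_INR | exact: entry_sum_ge0].
    move=> d y d1 xy; apply: Rle_trans (norm1_diff _ _) _.
    apply: Rle_trans (norm1_box (lincomb_sup_close J d1.1 xy)) _; right; ring.
have c0pos : 0 < norm1 (lincomb hm J).
  have [//|c0] := Rle_lt_or_eq_dec _ _ (norm1_ge0 (lincomb hm J)).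
  have hm0 := LI hm (norm1_eq0 (esym c0)).
  by move: hm1; rewrite /norm1 (vsum_ext (g := fun _ => 0)) ?vsum_zero => [|i]; [lra | rewrite hm0 Rabs_R0].
exists (norm1 (lincomb hm J)); split => // h.
have [h0|hpos] := Rle_lt_or_eq_dec _ _ (norm1_ge0 h); last first.
  by rewrite -hpos Rmult_0_r; exact: norm1_ge0.
have inv0 : 0 < / norm1 h by exact: Rinv_0_lt_compat.
have := hmin (fun i => / norm1 h * h i).
rewrite lincomb_scale -/(vscale _ h) !norm1_scale Rabs_right; last lra.
rewrite Rinv_l; last lra.
move=> /(_ erefl) hmh; apply: (Rmult_le_reg_l (/ norm1 h)) => //.
by have -> : / norm1 h * (norm1 (lincomb hm J) * norm1 h) = norm1 (lincomb hm J) by field; lra.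
Qed.

Lemma sqdist_lincomb_continuous n r (J : 'I_r -> vec n) b :
  sup_continuous (fun c => sqdist b (lincomb c J)).
Proof.
have n0 := pos_INR n; have E0 := entry_sum_ge0 J.
apply: sup_continuous_of_bound => x.
set N := norm1 (vsub b (lincomb x J)); have N0 : 0 <= N := norm1_ge0 _.
exists (entry_sum J * (2 * N + INR n * entry_sum J)); split.
  by apply: Rmult_le_pos => //; nra.
move=> d y [d0 d1] xy; have dE : 0 <= d * entry_sum J by apply: Rmult_le_pos.
apply: Rle_trans (sqdist_sup_bound b dE (lincomb_sup_close J d0 xy)) _; rewrite -/N.
have : INR n * (entry_sum J * entry_sum J) * (d * d) <=
       INR n * (entry_sum J * entry_sum J) * d.
  by apply: Rmult_le_compat_l; nra.
nra.
Qed.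

(** Orthogonal projection onto the span of an independent family: the
    coefficients minimising |b - sum_i c_i J_i| make the residual orthogonal. *)
Lemma orthogonal_projection n r (J : 'I_r -> vec n) : lin_indep J ->
  forall b, exists c, forall i, dot (vsub b (lincomb c J)) (J i) = 0.
Proof.
move=> LI b; have [c0 [c00 Jc0]] := lincomb_lower_bound LI.
have n0 := pos_INR n; have b0 := dot_self_ge0 b.
set M := (norm1 b + INR n * (dot b b + 1)) / c0.
have M0 : 0 <= M.
  apply: Rmult_le_pos; last by apply: Rlt_le; apply: Rinv_0_lt_compat.
  by have := norm1_ge0 b; nra.
have [c [_ cmin]] : exists c, True /\
    forall c', True -> sqdist b (lincomb c J) <= sqdist b (lincomb c' J).
  apply: (vec_min_coercive (x0 := fun _ => 0) (M := M)) => //.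
  - by move=> i; rewrite Rabs_R0.
  - exact: sqdist_lincomb_continuous.
  - move=> x _ /not_bounded_by [i iM].
    have large : INR n * (dot b b + 1) < norm1 (vsub b (lincomb x J)).
      have := norm1_diff (lincomb x J) b; have := Jc0 x; have := abs_le_norm1 x i.
      have -> : norm1 (vsub (lincomb x J) b) = norm1 (vsub b (lincomb x J)).
        by apply: vsum_ext => j; rewrite /vsub -Rabs_Ropp; congr Rabs; ring.
      have : c0 * M = norm1 b + INR n * (dot b b + 1) by rewrite /M; field; lra.
      have := Rle_abs (norm1 (lincomb x J) - norm1 b); nra.
    have := sqnorm_gt_of_norm1 (Rplus_le_le_0_compat _ _ b0 Rle_0_1) large.
    rewrite /sqdist; have -> : vsub b (lincomb (fun _ => 0) J) = b.
      apply: functional_extensionality => j.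
      by rewrite /vsub /lincomb (vsum_ext (g := fun _ => 0)) ?vsum_zero => [|k]; ring.
    nra.
exists c => i; apply: orth_of_min_on_line => t.
have := cmin (fun k => c k + (- t) * ebasis i k) I; rewrite lincomb_add_basis.
congr Rle; rewrite /sqdist; congr dot; apply: functional_extensionality => j;
  by rewrite /vsub /vadd /vscale; ring.
Qed.

Lemma derivable_pt_lim_vsum m (F : 'I_m -> R -> R) (l : 'I_m -> R) x :
  (forall i, derivable_pt_lim (F i) x (l i)) ->
  derivable_pt_lim (fun t => vsum (fun i => F i t)) x (vsum l).
Proof.
elim: m F l => [|m IH] F l Fl.
  rewrite /vsum big_ord0; apply: (derivable_pt_lim_ext (fct_cte 0)).
    by move=> t; rewrite big_ord0.
  exact: derivable_pt_lim_const.
rewrite vsum_recr.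
apply: (derivable_pt_lim_ext
  ((fun t => vsum (fun i => F (widen_ord (leqnSn m) i) t)) + F ord_max)%F).
  by move=> t; rewrite [RHS]vsum_recr.
by apply: derivable_pt_lim_plus; [apply: IH => i |]; exact: Fl.
Qed.

Lemma derivable_pt_lim_dot n (gamma : R -> vec n) (v w : vec n) x :
  (forall j, derivable_pt_lim (fun t => gamma t j) x (v j)) ->
  derivable_pt_lim (fun t => dot (gamma t) w) x (dot v w).
Proof.
move=> dg; apply: (derivable_pt_lim_vsum (F := fun j t => gamma t j * w j)) => j.
apply: (derivable_pt_lim_ext (fun t => w j * gamma t j)); first by move=> t; ring.
by rewrite Rmult_comm; exact: derivable_pt_lim_scal.
Qed.

Lemma derive_abs_le f l K d : derivable_pt_lim f 0 l -> 0 < d ->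
  (forall t, Rabs t < d -> t <> 0 -> Rabs (f t - f 0) <= K * Rabs t) -> Rabs l <= K.
Proof.
move=> fl d0 fK; apply: le_of_le_eps => e e0.
have [del fdel] := fl e e0; have del0 := cond_pos del.
set h := Rmin del d / 2.
have h0 : 0 < h by rewrite /h; have := Rmin_glb_lt _ _ _ del0 d0; lra.
have hdel : h < del by rewrite /h; have := Rmin_l del d; lra.
have hd : h < d by rewrite /h; have := Rmin_r del d; lra.
have := fdel h (Rgt_not_eq _ _ h0) ltac:(rewrite Rabs_right; lra).
have := fK h ltac:(rewrite Rabs_right; lra) (Rgt_not_eq _ _ h0).
rewrite Rplus_0_l (Rabs_right h); last lra.
move=> fh quot; have : Rabs ((f h - f 0) / h) <= K.
  rewrite /Rdiv Rabs_mult Rabs_inv (Rabs_right h); last lra.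
  apply: (Rmult_le_reg_r h) => //; rewrite Rmult_assoc Rinv_l; lra.
have := Rabs_triang_inv l ((f h - f 0) / h); rewrite Rabs_minus_sym in quot; lra.
Qed.

Lemma derive_zero_at_min f l d : derivable_pt_lim f 0 l -> 0 < d ->
  (forall t, Rabs t < d -> f 0 <= f t) -> l = 0.
Proof.
move=> fl d0 fmin.
have := deriv_minimum f (- d) d 0 (exist _ l fl) ltac:(lra) ltac:(lra).
by rewrite /derive_pt /=; apply=> t t1 t2; apply: fmin; apply: Rabs_def1; lra.
Qed.

Lemma fin_min_radius m (P : 'I_m -> R -> Prop) :
  (forall i d d', 0 < d' <= d -> P i d -> P i d') ->
  (forall i, exists d, 0 < d /\ P i d) -> exists d, 0 < d /\ forall i, P i d.
Proof.
elim: m P => [|m IH] P Pmono Pex; first by exists 1; split; [lra | case].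
have [d1 [d10 P1]] := IH (fun i => P (widen_ord (leqnSn m) i)) (fun i => Pmono _) (fun i => Pex _).
have [d2 [d20 P2]] := Pex ord_max.
have dpos : 0 < Rmin d1 d2 by apply: Rmin_glb_lt.
have m1 := Rmin_l d1 d2; have m2 := Rmin_r d1 d2.
exists (Rmin d1 d2); split => // i; have [->|ne] := eqVneq i ord_max.
  by apply: (Pmono _ d2) => //; lra.
have im : (i < m)%N.
  by have := ltn_ord i; rewrite ltnS leq_eqVlt => /orP[/eqP iE|//]; case/eqP: ne; apply: val_inj.
have -> : i = widen_ord (leqnSn m) (Ordinal im) by apply: val_inj.
by apply: (Pmono _ d1); [lra | exact: P1].
Qed.

Lemma curve_lipschitz n (gamma : R -> vec n) (v : vec n) :
  (forall j, derivable_pt_lim (fun t => gamma t j) 0 (v j)) ->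
  exists d, 0 < d /\ forall t, Rabs t < d ->
    norm1 (vsub (gamma t) (gamma 0)) <= (norm1 v + INR n) * Rabs t.
Proof.
move=> dg; have [d [d0 gd]] : exists d, 0 < d /\ forall j t, Rabs t < d ->
    Rabs (gamma t j - gamma 0 j) <= (Rabs (v j) + 1) * Rabs t.
  apply: (fin_min_radius (P := fun j d => forall t, Rabs t < d ->
    Rabs (gamma t j - gamma 0 j) <= (Rabs (v j) + 1) * Rabs t)).
    by move=> j d d' dd' jd t td'; apply: jd; lra.
  move=> j; have [del jdel] := dg j 1 Rlt_0_1.
  exists del; split => [|t tdel]; first exact: cond_pos.
  have [->|t0] := Req_dec t 0; first by rewrite Rminus_diag Rabs_R0 Rmult_0_r; lra.
  have := jdel t t0 tdel; rewrite Rplus_0_l => quot.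
  have -> : gamma t j - gamma 0 j = ((gamma t j - gamma 0 j) / t) * t by field.
  rewrite Rabs_mult; apply: Rmult_le_compat_r; first exact: Rabs_pos.
  by have := Rabs_triang_inv ((gamma t j - gamma 0 j) / t) (v j); lra.
exists d; split => // t td.
apply: Rle_trans (vsum_le (g := fun j => Rabs t * Rabs (v j) + Rabs t * 1) _) _.
  by move=> j; rewrite /vsub; have := gd j t td; lra.
by rewrite vsum_add !vsum_scal vsum_const -/(norm1 v); right; ring.
Qed.

Lemma nearest_in_normal_plane n (L : vec n -> Prop) x q :
  L q -> (forall y, L y -> sqdist x q <= sqdist x y) -> normal_plane L q x.
Proof.
move=> Lq qmin v [gamma [eps [e0 [Lg [g0 dg]]]]].
have dsq : derivable_pt_lim (fun t => sqdist x (gamma t)) 0 (-2 * dot (vsub x q) v).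
  rewrite /sqdist /dot -vsum_scal.
  apply: (derivable_pt_lim_vsum (F := fun j t => vsub x (gamma t) j * vsub x (gamma t) j)) => j.
  have dj : derivable_pt_lim (fun t => x j - gamma t j) 0 (- v j).
    apply: (derivable_pt_lim_ext (fct_cte (x j) - (fun t => gamma t j))%F) => //.
    rewrite -[- v j]Rminus_0_l.
    by apply: derivable_pt_lim_minus; [exact: derivable_pt_lim_const | exact: dg].
  have := derivable_pt_lim_mult _ _ _ _ _ dj dj; rewrite /vsub g0.
  by congr derivable_pt_lim; ring.
have gmin t : Rabs t < eps -> sqdist x (gamma 0) <= sqdist x (gamma t).
  by move=> te; rewrite g0; exact: qmin (Lg t te).
by have := derive_zero_at_min dsq e0 gmin; lra.
Qed.

Lemma tangent_orth_of_small n (S : vec n -> Prop) p w :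
  (forall eps, 0 < eps -> exists m, 0 < m /\ forall x, S x -> Defs.dist p x < m ->
     Rabs (dot (vsub x p) w) <= eps * norm1 (vsub x p)) ->
  forall v, tangent_vec S p v -> dot v w = 0.
Proof.
move=> small v [gamma [eg [eg0 [Sg [g0 dg]]]]].
have [dl [dl0 lip]] := curve_lipschitz dg; rewrite g0 in lip.
set A := norm1 v + INR n in lip; have A0 : 0 <= A.
  by rewrite /A; have := norm1_ge0 v; have := pos_INR n; lra.
apply: (@eq0_of_small _ A) => eps e0; have [m [m0 sm]] := small eps e0.
set d := Rmin eg (Rmin dl (m / (A + 1))).
have d0 : 0 < d by do 2?apply: Rmin_glb_lt => //; apply: Rdiv_lt_0_compat; lra.
have [d1 [d2 d3]] : d <= eg /\ d <= dl /\ d <= m / (A + 1).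
  have := Rmin_l eg (Rmin dl (m / (A + 1))); have := Rmin_r eg (Rmin dl (m / (A + 1))).
  by have := Rmin_l dl (m / (A + 1)); have := Rmin_r dl (m / (A + 1)); rewrite -/d; lra.
apply: (derive_abs_le (derivable_pt_lim_dot w dg) d0) => t td _.
have xp := lip t ltac:(lra); have t0 := Rabs_pos t.
have near : Defs.dist p (gamma t) < m.
  rewrite dist_sym; apply: Rle_lt_trans (dist_le_norm1 _ _) _.
  apply: Rle_lt_trans xp _; apply: Rle_lt_trans (mul_div_succ_lt A0 m0).
  by apply: Rmult_le_compat_l => //; lra.
rewrite -dot_subl g0; apply: Rle_trans (sm _ (Sg t ltac:(lra)) near) _.
by rewrite Rmult_assoc; apply: Rmult_le_compat_l; lra.
Qed.

Lemma mvt_estimate (phi phi' : R -> R) h c eps :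
  (forall s, Rabs s <= Rabs h -> derivable_pt_lim phi s (phi' s) /\ Rabs (phi' s - c) <= eps) ->
  Rabs (phi h - phi 0 - h * c) <= eps * Rabs h.
Proof.
move=> dphi.
have [s [sh E]] : exists s, Rabs s <= Rabs h /\ phi h - phi 0 = phi' s * h.
  have [h0|[h0|h0]] := Rtotal_order h 0.
  - have [s [E s0]] := MVT_cor2 phi phi' _ _ h0 (fun s sh =>
      proj1 (dphi s ltac:(rewrite (Rabs_left1 s) ?(Rabs_left1 h); lra))).
    by exists s; split; [rewrite (Rabs_left1 s) ?(Rabs_left1 h); lra | lra].
  - by exists 0; rewrite h0; split; [lra | ring].
  - have [s [E s0]] := MVT_cor2 phi phi' _ _ h0 (fun s sh =>
      proj1 (dphi s ltac:(rewrite (Rabs_right s) ?(Rabs_right h); lra))).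
    by exists s; split; [rewrite (Rabs_right s) ?(Rabs_right h); lra | lra].
have -> : phi h - phi 0 - h * c = (phi' s - c) * h by rewrite E; ring.
by rewrite Rabs_mult; apply: Rmult_le_compat_r; [exact: Rabs_pos | exact: (dphi s sh).2].
Qed.

Lemma coord_step_estimate r (V : vec r -> Prop) (g : vec r -> R) (D : 'I_r -> vec r -> R)
    z k h c eps :
  (forall i x, V x -> has_partial g i x (D i x)) ->
  (forall s, Rabs s <= Rabs h -> V (vadd z (vscale s (ebasis k))) /\
       Rabs (D k (vadd z (vscale s (ebasis k))) - c) <= eps) ->
  Rabs (g (vadd z (vscale h (ebasis k))) - g z - h * c) <= eps * Rabs h.
Proof.
move=> gD near.
rewrite -{2}(vadd_scale0 z (ebasis k)).
apply: (mvt_estimate (phi := fun s => g (vadd z (vscale s (ebasis k))))) => s sh.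
split; last exact: (near s sh).2.
move=> e e0; have [del ddel] := gD k _ (near s sh).1 e e0; exists del => t t0 tdel.
by have := ddel t t0 tdel; rewrite !vadd_scale_add Rplus_0_l Rplus_0_r.
Qed.

Definition coord_path r (y0 y : vec r) (k : nat) : vec r :=
  fun i => if (i < k)%N then y i else y0 i.

Lemma coord_path_step r (y0 y : vec r) (k : 'I_r) :
  coord_path y0 y k.+1 = vadd (coord_path y0 y k) (vscale (y k - y0 k) (ebasis k)).
Proof.
apply: functional_extensionality => i; rewrite /coord_path /vadd /vscale /ebasis ltnS leq_eqVlt.
have [->|ne] := eqVneq i k; first by rewrite eqxx ltnn /=; ring.
have -> : (nat_of_ord i == nat_of_ord k) = false.
  by apply/negbTE; apply: contra ne => /eqP/val_inj ->.
by rewrite /=; ring.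
Qed.

Lemma partials_near r (V : vec r -> Prop) (D : 'I_r -> vec r -> R) y0 eps :
  is_open V -> V y0 -> (forall i, cont_on V (fun x (_ : 'I_1) => D i x)) -> 0 < eps ->
  exists del, 0 < del /\ forall z, sup_close del z y0 ->
    V z /\ forall i, Rabs (D i z - D i y0) <= eps.
Proof.
move=> Vo Vy0 Dc e0; have [dV [dV0 ballV]] := Vo y0 Vy0.
have [dC [dC0 DdC]] : exists dC, 0 < dC /\
    forall i z, V z -> Defs.dist y0 z < dC -> Rabs (D i y0 - D i z) < eps.
  apply: (fin_min_radius (P := fun i d => forall z, V z -> Defs.dist y0 z < d ->
    Rabs (D i y0 - D i z) < eps)).
    by move=> i d d' dd' H z Vz yz; apply: H => //; lra.
  move=> i; have [d [d0 Dd]] := Dc i y0 Vy0 eps e0.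
  exists d; split => // z Vz yz; apply: Rle_lt_trans (Dd z Vz yz).
  exact: (dist_coord (fun _ : 'I_1 => D i y0) (fun _ => D i z) ord0).
have m0 : 0 < Rmin dV dC by apply: Rmin_glb_lt.
have m1 := Rmin_l dV dC; have m2 := Rmin_r dV dC.
have r0 := pos_INR r.
exists (Rmin dV dC / (INR r + 1)); split; first by apply: Rdiv_lt_0_compat; lra.
move=> z zy; have near : Defs.dist y0 z < Rmin dV dC.
  apply: Rle_lt_trans (mul_div_succ_lt r0 m0); apply: dist_le_sup => i.
  by rewrite Rabs_minus_sym; exact: zy.
have Vz : V z by apply: ballV; lra.
split => // i; rewrite Rabs_minus_sym; apply: Rlt_le; apply: DdC => //; lra.
Qed.

Lemma first_order_estimate r (V : vec r -> Prop) (g : vec r -> R) (D : 'I_r -> vec r -> R) y0 :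
  is_open V -> V y0 -> (forall i x, V x -> has_partial g i x (D i x)) ->
  (forall i, cont_on V (fun x (_ : 'I_1) => D i x)) ->
  forall eps, 0 < eps -> exists del, 0 < del /\ forall y, sup_close del y y0 ->
  Rabs (g y - g y0 - vsum (fun i => (y i - y0 i) * D i y0)) <= eps * norm1 (vsub y y0).
Proof.
move=> Vo Vy0 gD Dc eps e0.
have [del [del0 box]] := partials_near Vo Vy0 Dc e0.
exists del; split => // y yy0; set P := coord_path y0 y.
have Pstep (k : 'I_r) : Rabs (g (P k.+1) - g (P k) - (y k - y0 k) * D k y0) <= eps * Rabs (y k - y0 k).
  rewrite /P coord_path_step; apply: (coord_step_estimate gD) => s sk.
  suff zy0 : sup_close del (vadd (coord_path y0 y k) (vscale s (ebasis k))) y0.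
    by have [Vz Dz] := box _ zy0; split.
  move=> i; rewrite /vadd /vscale /ebasis /coord_path.
  have [->|ne] := eqVneq i k.
    rewrite ltnn Rmult_1_r; have -> : y0 k + s - y0 k = s by ring.
    by have := yy0 k; lra.
  rewrite Rmult_0_r Rplus_0_r; case: ifP => _; first exact: yy0.
  by rewrite Rminus_diag Rabs_R0; lra.
have -> : g y - g y0 - vsum (fun i => (y i - y0 i) * D i y0) =
    vsum (fun k : 'I_r => g (P k.+1) - g (P k) - (y k - y0 k) * D k y0).
  rewrite vsum_sub (vsum_telescope (fun k => g (P k))).
  have -> : P r = y by apply: functional_extensionality => i; rewrite /P /coord_path ltn_ord.
  by have -> : P 0%N = y0 by apply: functional_extensionality.
apply: Rle_trans (vsum_abs _) _.
by rewrite /norm1 -vsum_scal; apply: vsum_le => k; exact: Pstep.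
Qed.

Lemma smooth_first_order n r (V : vec r -> Prop) (phi : vec r -> vec n) y0 (J : 'I_r -> vec n) :
  is_open V -> V y0 -> smooth_on V phi ->
  (forall i j, has_partial (fun y => phi y j) i y0 (J i j)) ->
  forall eps, 0 < eps -> exists del, 0 < del /\ forall y, sup_close del y y0 ->
  forall j, Rabs (phi y j - phi y0 j - lincomb (vsub y y0) J j) <= eps * norm1 (vsub y y0).
Proof.
move=> Vo Vy0 smooth dphi eps e0.
pose est_at j d := forall y, sup_close d y y0 ->
  Rabs (phi y j - phi y0 j - lincomb (vsub y y0) J j) <= eps * norm1 (vsub y y0).
have [d [d0 dj]] : exists d, 0 < d /\ forall j, est_at j d.
  apply: fin_min_radius => [j d d' dd' H y yy0|j].
    by apply: H => i; have := yy0 i; lra.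
  have [_ [D [gD Dc]]] := smooth 1%N j.
  have [del [del0 est]] := first_order_estimate Vo Vy0 gD Dc e0.
  exists del; split => // y yy0.
  have -> : lincomb (vsub y y0) J j = vsum (fun i => (y i - y0 i) * D i y0).
    apply: vsum_ext => i; congr (_ * _).
    exact: uniqueness_limite (dphi i j) (gD i y0 Vy0).
  exact: est.
by exists d; split => // y yy0 j; exact: dj.
Qed.

Lemma tangent_in_hyperplane n (S : vec n -> Prop) q u p :
  (forall y, S y -> dot (vsub y q) u = 0) -> S p ->
  forall v, tangent_vec S p v -> dot v u = 0.
Proof.
move=> flat Sp; apply: tangent_orth_of_small => eps e0; exists 1; split => [|x Sx _]; first lra.
have -> : vsub x p = vsub (vsub x q) (vsub p q).
  by apply: functional_extensionality => j; rewrite /vsub; ring.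
rewrite dot_subl !flat // Rminus_diag Rabs_R0.
by apply: Rmult_le_pos; [lra | exact: norm1_ge0].
Qed.

Section Chart.
Variables (n r : nat) (L W : vec n -> Prop) (V : vec r -> Prop).
Variables (phi : vec r -> vec n) (psi : vec n -> vec r) (p : vec n) (y0 : vec r).
Variable J : 'I_r -> vec n.
Hypotheses (W_open : is_open W) (V_open : is_open V) (W_p : W p) (V_y0 : V y0).
Hypotheses (phi_y0 : phi y0 = p) (psi_p : psi p = y0).
Hypothesis phi_smooth : smooth_on V phi.
Hypothesis phi_in_L : forall y, V y -> L (phi y).
Hypothesis psi_inv : forall x, L x -> W x -> V (psi x) /\ phi (psi x) = x.
Hypothesis psi_cont : cont_on (fun x => L x /\ W x) psi.
Hypothesis J_partial : forall i j, has_partial (fun y => phi y j) i y0 (J i j).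
Hypothesis J_indep : lin_indep J.

(* The coordinate curves t |-> phi (y0 + t e_i) show that each J i is tangent. *)
Lemma chart_tangent i : tangent_vec L p (J i).
Proof.
have [d [d0 ball]] := V_open V_y0.
exists (fun t => phi (vadd y0 (vscale t (ebasis i)))), d; split => //; split.
  by move=> t td; apply: phi_in_L; apply: ball; rewrite dist_basis.
by split; [rewrite vadd_scale0 | exact: J_partial].
Qed.

Lemma chart_first_order eps : 0 < eps -> exists m, 0 < m /\
  forall x, L x -> Defs.dist p x < m ->
  forall j, Rabs (x j - p j - lincomb (vsub (psi x) y0) J j) <= eps * norm1 (vsub (psi x) y0).
Proof.
move=> e0; have [dT [dT0 taylor]] := smooth_first_order V_open V_y0 phi_smooth J_partial e0.
have L_p : L p by rewrite -phi_y0; exact: phi_in_L.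
have [dpsi [dpsi0 psi_near]] := psi_cont (conj L_p W_p) dT0.
have [dW [dW0 ballW]] := W_open W_p.
have m1 := Rmin_l dpsi dW; have m2 := Rmin_r dpsi dW.
exists (Rmin dpsi dW); split => [|x Lx px]; first exact: Rmin_glb_lt.
have Wx : W x by apply: ballW; lra.
have [Vx phix] := psi_inv Lx Wx.
rewrite -{1}phix -phi_y0; apply: taylor => i.
apply: Rlt_le; apply: Rle_lt_trans (dist_coord _ _ i) _.
by rewrite dist_sym -psi_p; apply: psi_near => //; lra.
Qed.

Lemma chart_inverse_bound : exists C m, 0 <= C /\ 0 < m /\
  forall x, L x -> Defs.dist p x < m -> norm1 (vsub (psi x) y0) <= C * norm1 (vsub x p).
Proof.
have [c0 [c00 Jc0]] := lincomb_lower_bound J_indep; have n0 := pos_INR n.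
set eps := c0 / (2 * (INR n + 1)).
have e0 : 0 < eps by apply: Rdiv_lt_0_compat; lra.
have neps : INR n * eps <= c0 / 2.
  have : c0 / 2 - INR n * eps = eps by rewrite /eps; field; lra.
  lra.
have [m [m0 est]] := chart_first_order e0.
exists (2 / c0), m; split; first by apply: Rlt_le; apply: Rdiv_lt_0_compat; lra.
split => // x Lx px; set h := vsub (psi x) y0.
have Jh : norm1 (lincomb h J) <= norm1 (vsub x p) + INR n * (eps * norm1 h).
  rewrite -vsum_const -vsum_add; apply: vsum_le => j.
  have := est x Lx px j; rewrite -/h (Rabs_minus_sym _ (lincomb h J j)) /vsub.
  by have := Rabs_triang_inv (lincomb h J j) (x j - p j); lra.
have h0 := norm1_ge0 h; have := Jc0 h.
have : INR n * (eps * norm1 h) <= c0 / 2 * norm1 h.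
  by rewrite -Rmult_assoc; apply: Rmult_le_compat_r.
move=> small big; apply: (Rmult_le_reg_l (c0 / 2)); first lra.
have -> : c0 / 2 * (2 / c0 * norm1 (vsub x p)) = norm1 (vsub x p) by field; lra.
lra.
Qed.

Lemma chart_normal_small w : (forall i, dot (J i) w = 0) ->
  forall eps, 0 < eps -> exists m, 0 < m /\ forall x, L x -> Defs.dist p x < m ->
    Rabs (dot (vsub x p) w) <= eps * norm1 (vsub x p).
Proof.
move=> Jw eps e0; have [C [m1 [C0 [m10 inv]]]] := chart_inverse_bound.
set K := C * norm1 w; have K0 : 0 <= K by apply: Rmult_le_pos => //; exact: norm1_ge0.
have e1 : 0 < eps / (K + 1) by apply: Rdiv_lt_0_compat; lra.
have [m2 [m20 est]] := chart_first_order e1.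
have mm1 := Rmin_l m1 m2; have mm2 := Rmin_r m1 m2.
exists (Rmin m1 m2); split => [|x Lx px]; first exact: Rmin_glb_lt.
set h := vsub (psi x) y0; set E := vsub (vsub x p) (lincomb h J).
have -> : dot (vsub x p) w = dot E w.
  have -> : vsub x p = vadd (lincomb h J) E.
    by apply: functional_extensionality => j; rewrite /E /vadd /vsub; ring.
  by rewrite dot_addl dot_lincomb_orth // Rplus_0_l.
apply: Rle_trans (dot_abs_le _ (est x Lx ltac:(lra))) _.
have hx := inv x Lx ltac:(lra); have w0 := norm1_ge0 w; have x0 := norm1_ge0 (vsub x p).
apply: Rle_trans (_ : eps / (K + 1) * (K * norm1 (vsub x p)) <= _).
  rewrite Rmult_assoc; apply: Rmult_le_compat_l; first lra.
  by have := Rmult_le_compat_r _ _ _ w0 hx; rewrite /K; lra.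
rewrite -Rmult_assoc; apply: Rmult_le_compat_r => //; rewrite Rmult_comm.
by apply: Rlt_le; exact: mul_div_succ_lt.
Qed.

(* Every tangent vector of L at p lies in the span of the J i, in the sense
   that it is orthogonal to everything orthogonal to them. *)
Lemma chart_tangent_orth w : (forall i, dot (J i) w = 0) ->
  forall v, tangent_vec L p v -> dot v w = 0.
Proof. by move=> Jw; apply: tangent_orth_of_small; exact: chart_normal_small. Qed.

End Chart.

Section DisjointNormals.
Variables (n : nat) (L : vec n -> Prop).
Hypothesis L_closed : is_closed L.
Hypothesis L_nonempty : exists p, L p.
Hypothesis normals_disjoint : forall p q, L p -> L q -> p <> q ->
  ~ (exists x, normal_plane L p x /\ normal_plane L q x).

(* Otherwise a point x far out on the
   normal line q + R u is closer to some y in L than to q, so its nearest point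
   q' in L differs from q while x lies on the normal planes at both q and q'. *)
Lemma normal_flat q u : L q -> (forall v, tangent_vec L q v -> dot u v = 0) ->
  forall y, L y -> dot (vsub y q) u = 0.
Proof.
move=> Lq uq y Ly; apply: NNPP => s0; set s := dot (vsub y q) u in s0.
set D := sqdist y q; have D0 : 0 <= D by exact: dot_self_ge0.
have ss : 0 < s * s by have := Rsqr_pos_lt s s0; rewrite /Rsqr.
set t := (D + 1) / (2 * (s * s)); have t0 : 0 < t by apply: Rdiv_lt_0_compat; lra.
set x := vadd q (vscale (t * s) u).
have xq : vsub x q = vscale (t * s) u.
  by apply: functional_extensionality => j; rewrite /x /vsub /vadd /vscale; ring.
have x_normal_q : normal_plane L q x.
  by move=> v qv; rewrite xq dot_scalel uq //; ring.
have closer : sqdist x y < sqdist x q.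
  rewrite /sqdist xq.
  have -> : vsub x y = vadd (vscale (-1) (vsub y q)) (vscale (t * s) u).
    by apply: functional_extensionality => j; rewrite /x /vsub /vadd /vscale; ring.
  rewrite dot_add_self !dot_scale_self dot_scalel dot_scaler -/s -/(sqdist y q) -/D.
  have : 2 * t * (s * s) = D + 1 by rewrite /t; field; lra.
  nra.
have [q' [Lq' q'min]] := nearest_point x L_nonempty L_closed.
apply: (normals_disjoint Lq' Lq) => [q'q|]; last first.
  by exists x; split => //; exact: nearest_in_normal_plane.
by rewrite q'q in q'min; have := q'min y Ly; lra.
Qed.

Lemma surface_in_plane r p (J : 'I_r -> vec n) : L p -> lin_indep J ->
  (forall w, (forall i, dot (J i) w = 0) -> forall v, tangent_vec L p v -> dot v w = 0) ->
  forall x, L x -> exists c, x = vadd p (lincomb c J).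
Proof.
move=> Lp J_indep tangent_orth x Lx.
have [c cJ] := orthogonal_projection J_indep (vsub x p).
set w := vsub (vsub x p) (lincomb c J) in cJ.
have Jw i : dot (J i) w = 0 by rewrite dot_comm cJ.
have w_normal v : tangent_vec L p v -> dot w v = 0.
  by move=> pv; rewrite dot_comm; exact: tangent_orth w Jw v pv.
have xw : dot (vsub x p) w = 0 := normal_flat Lp w_normal Lx.
have : sqdist (vsub x p) (lincomb c J) = 0.
  by rewrite /sqdist -/w {1}/w dot_subl xw dot_lincomb_orth //; ring.
move=> /sqdist_eq0 xJ; exists c; apply: functional_extensionality => j.
by have := congr1 (fun f => f j) xJ; rewrite /vsub /vadd /=; lra.
Qed.

(* Inclusion of the affine plane p + span J in L, when the J i are tangent at p:
   the nearest point q of L to z = p + J c has z - q normal to L everywhere,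
   hence orthogonal to p - q and to the tangent vectors J i, so z = q. *)
Lemma plane_in_surface r p (J : 'I_r -> vec n) : L p -> (forall i, tangent_vec L p (J i)) ->
  forall c, L (vadd p (lincomb c J)).
Proof.
move=> Lp J_tangent c; set z := vadd p (lincomb c J).
have [q [Lq qmin]] := nearest_point z L_nonempty L_closed.
set u := vsub z q.
have flat := normal_flat Lq (fun v qv => nearest_in_normal_plane Lq qmin qv).
have Ju i : dot (J i) u = 0 := tangent_in_hyperplane flat Lp (J_tangent i).
have zq : sqdist z q = 0.
  rewrite /sqdist -/u {1}(_ : u = vadd (lincomb c J) (vsub p q)).
    by rewrite dot_addl dot_lincomb_orth // (flat p Lp); ring.
  by apply: functional_extensionality => j; rewrite /u /z /vsub /vadd; ring.
by rewrite (sqdist_eq0 zq).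
Qed.

End DisjointNormals.

Theorem theorem1p16 (n r : nat) (L : vec n -> Prop) :
  (1 <= r)%N -> (r <= n - 1)%N ->
  (exists p, L p) ->
  regular_surface r L ->
  is_closed L ->
  (forall p q, L p -> L q -> p <> q ->
     ~ (exists x, normal_plane L p x /\ normal_plane L q x)) ->
  affine_plane r L.
Proof.
move=> _ _ L_nonempty L_surface L_closed normals_disjoint.
have [p Lp] := L_nonempty.
have [W [V [phi [psi [W_open [W_p [V_open [phi_smooth [phi_imm [phi_V [psi_inv psi_cont]]]]]]]]]]]
  := L_surface p Lp.
have [V_y0 phi_y0] := psi_inv p Lp W_p.
have [J [J_partial J_indep]] := phi_imm _ V_y0.
have phi_in_L y : V y -> L (phi y) by move=> Vy; have [_ []] := phi_V y Vy.
exists p, J; split => // x; split.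
- apply: (surface_in_plane L_closed L_nonempty normals_disjoint Lp J_indep).
  exact: (chart_tangent_orth W_open V_open W_p V_y0 phi_y0 erefl phi_smooth phi_in_L
    psi_inv psi_cont J_partial J_indep).
- move=> [c ->]; apply: (plane_in_surface L_closed L_nonempty normals_disjoint Lp).
  exact: (chart_tangent V_open V_y0 phi_y0 phi_in_L J_partial).
Qed.
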